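(* Suppose $\Pi$ is Klingen-ordinary at $p$ and we are in Case B, with $(t_1, t_2) = (0, r_1 - r_2)$. If one of the pairwise products $\{ \alpha \mathfrak{a}_2, \dots, \delta \mathfrak{b}_2\}$ is equal to $p^{r_1 + 2}$, then $\Pi$ must in fact be Borel-ordinary at $p$, $\Sigma_2$ is ordinary at $p$, and the ``bad'' eigenvalue is either $\beta \mathfrak{b}_2$ or $\gamma \mathfrak{a}_2$ (or possibly both) where $\alpha$ and $\mathfrak{a}_2$ are the unit eigenvalues.
   Context: $\Pi$ is a non-endoscopic, non-CAP cuspidal automorphic representation of $\mathrm{GSp}_4$, discrete series at $\infty$ of weight $(r_1+3, r_2+3)$ with $r_1 \ge r_2 \ge 0$, unramified at $p$. Its Hecke parameters $\alpha,\beta,\gamma,\delta$ at $p$ (of $\Pi_p' = \Pi_p \otimes \|\cdot\|^{-(r_1+r_2)/2}$) all have complex absolute value $p^{(r_1+r_2+3)/2}$, satisfy $\alpha\delta = \beta\gamma = p^{r_1+r_2+3}\chi_\Pi(p)$ (with $\chi_\Pi(p)$ a root of unity), and are ordered so that $v_p(\alpha) \le v_p(\beta) \le v_p(\gamma) \le v_p(\delta)$; then $v_p(\alpha)\ge 0$, $v_p(\alpha\beta)\ge r_2+1$. $\Pi$ is Siegel-ordinary if $v_p(\alpha)=0$, Klingen-ordinary if $v_p(\alpha\beta)=r_2+1$, Borel-ordinary if both. Case B: additionally $\Sigma_2$ is a cuspidal automorphic representation of $\mathrm{GL}_2$ generated by a holomorphic newform of weight $t_2+2$, unramified at $p$, with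 Hecke parameters $\mathfrak{a}_2,\mathfrak{b}_2$ (of $\Sigma_{2,p}' = \Sigma_{2,p}\otimes\|\cdot\|^{-t_2/2}$) of complex absolute value $p^{(t_2+1)/2}$ and $\mathfrak{a}_2\mathfrak{b}_2 = p^{t_2+1}\chi_{\Sigma_2}(p)$; one studies $\Pi\boxtimes\Sigma_2$ on $\mathrm{GSp}_4\times\mathrm{GL}_2$. Here $t_1 \ge 0$ is an integer such that $(r_1,r_2,t_1,t_2)$ satisfy $t_1+t_2\equiv r_1+r_2 \bmod 2$, $|t_1-t_2|\le r_1-r_2 \le t_1+t_2\le r_1+r_2$. The set $\{\alpha\mathfrak{a}_2,\dots,\delta\mathfrak{b}_2\}$ is the set of all eight products of a parameter of $\Pi$ with a parameter of $\Sigma_2$. *)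

(* Hecke parameters live in algC (the algebraic closure of Q,
   with its fixed complex embedding giving the norm `|_|); the p-adic valuation
   comes from a fixed embedding Qbar -> Qbar_p, encoded as a rational-valued
   valuation on algC normalized by v(p) = 1. *)
From mathcomp Require Import all_boot all_order all_algebra all_field.
Set Implicit Arguments. Unset Strict Implicit. Unset Printing Implicit Defensive.
Import Order.TTheory GRing.Theory Num.Theory.
Local Open Scope ring_scope.

(* v is a (normalized) p-adic valuation on algC (values on nonzero elements;
   the value at 0 is irrelevant and never used). Such valuations are exactly
   those induced by embeddings algC = Qbar -> Qbar_p. *)
Definition p_adic_valuation (p : nat) (v : algC -> rat) : Prop :=
  [/\ forall x y : algC, x != 0 -> y != 0 -> v (x * y) = v x + v y,
      forall x y : algC, x != 0 -> y != 0 -> x + y != 0 ->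
        Num.min (v x) (v y) <= v (x + y)
    & v (p%:R) = 1].

Definition root_of_unity (z : algC) : Prop :=
  exists n : nat, (0 < n)%N /\ z ^+ n = 1.

Definition GSp4_hecke_params (p : nat) (v : algC -> rat) (r1 r2 : nat)
  (alpha beta gamma delta chi : algC) : Prop :=
  [/\ `|alpha| ^+ 2 = p%:R ^+ (r1 + r2 + 3) /\ `|beta| ^+ 2 = p%:R ^+ (r1 + r2 + 3)
      /\ `|gamma| ^+ 2 = p%:R ^+ (r1 + r2 + 3) /\ `|delta| ^+ 2 = p%:R ^+ (r1 + r2 + 3),
      root_of_unity chi,
      alpha * delta = p%:R ^+ (r1 + r2 + 3) * chi /\
      beta * gamma = p%:R ^+ (r1 + r2 + 3) * chi,
      v alpha <= v beta /\ v beta <= v gamma /\ v gamma <= v delta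
    & 0 <= v alpha /\ (r2.+1)%:R <= v (alpha * beta)].

(* Hecke parameters a2, b2 at p of Sigma'_{2,p} (weight t2+2), ordered so that
   v(a2) <= v(b2); they are p-adically integral. *)
Definition GL2_hecke_params (p : nat) (v : algC -> rat) (t2 : nat)
  (a2 b2 chi : algC) : Prop :=
  [/\ `|a2| ^+ 2 = p%:R ^+ (t2 + 1) /\ `|b2| ^+ 2 = p%:R ^+ (t2 + 1),
      root_of_unity chi,
      a2 * b2 = p%:R ^+ (t2 + 1) * chi
    & 0 <= v a2 /\ v a2 <= v b2].

Definition siegel_ordinary (v : algC -> rat) (alpha : algC) : Prop :=
  v alpha = 0.
Definition klingen_ordinary (v : algC -> rat) (r2 : nat) (alpha beta : algC) : Prop :=
  v (alpha * beta) = (r2.+1)%:R.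
Definition borel_ordinary (v : algC -> rat) (r2 : nat) (alpha beta : algC) : Prop :=
  siegel_ordinary v alpha /\ klingen_ordinary v r2 alpha beta.
Definition GL2_ordinary (v : algC -> rat) (a2 : algC) : Prop := v a2 = 0.

Definition admissible_weights (r1 r2 t1 t2 : nat) : Prop :=
  [/\ (r2 <= r1)%N, (t1 + t2 = r1 + r2 %[mod 2])%N,
      (maxn t1 t2 - minn t1 t2 <= r1 - r2)%N,
      (r1 - r2 <= t1 + t2)%N & (t1 + t2 <= r1 + r2)%N].

Definition pair_products (alpha beta gamma delta a2 b2 : algC) : seq algC :=
  [:: alpha * a2; alpha * b2; beta * a2; beta * b2;
      gamma * a2; gamma * b2; delta * a2; delta * b2].

(* Everything is read off from valuations.  Writing [va <= vb <= vc <= vd] for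
   the valuations of alpha, beta, gamma, delta and [wa <= wb] for those of a2, b2,
   the functional equations and the Klingen condition give
     [va + vd = vb + vc = r1 + r2 + 3],  [wa + wb = r1 - r2 + 1],  [va + vb = r2 + 1],
   so that [vb + wb = r1 + 2 - (va + wa)] and [vc + wa = r1 + 2 + va + wa].  Hence a
   product of valuation [r1 + 2] can only be beta b2 or gamma a2, and only when
   [va = wa = 0]; every other pairwise product has valuation strictly below or
   strictly above [r1 + 2]. *)
From Pilot Require Import Defs.
From mathcomp Require Import all_boot all_order all_algebra all_field.
From mathcomp Require Import lra.
Import Order.TTheory GRing.Theory Num.Theory.
Local Open Scope ring_scope.

(* Qualified names: poly.v also defines a [root_of_unity]. *)
Lemma root_of_unity_neq0 {z : algC} : Defs.root_of_unity z -> z != 0.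
Proof.
case=> [[|n] [//= _ zn1]]; apply: contra_eq_neq zn1 => ->.
by rewrite expr0n eq_sym oner_neq0.
Qed.

Lemma sqr_norm_natX_neq0 {p k : nat} {x : algC} :
  (0 < p)%N -> `|x| ^+ 2 = p%:R ^+ k -> x != 0.
Proof.
move=> p_gt0; apply: contra_eq_neq => ->.
by rewrite normr0 expr0n eq_sym expf_neq0 // pnatr_eq0 -lt0n.
Qed.

Section PAdicValuation.

Context {p : nat} {v : algC -> rat}.
Hypotheses (p_gt0 : (0 < p)%N) (vP : p_adic_valuation p v).

Lemma valuationM (x y : algC) : x != 0 -> y != 0 -> v (x * y) = v x + v y.
Proof. by case: vP => vM _ _; apply: vM. Qed.

Lemma valuation1 : v 1 = 0.
Proof.
have := @valuationM 1 1 (oner_neq0 _) (oner_neq0 _).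
by rewrite mulr1 => v1_double; lra.
Qed.

Lemma valuationX (x : algC) (n : nat) : x != 0 -> v (x ^+ n) = n%:R * v x.
Proof.
move=> x_neq0; elim: n => [|n IHn]; first by rewrite expr0 mul0r valuation1.
by rewrite exprS valuationM ?expf_neq0 // IHn mulrSr mulrDl mul1r addrC.
Qed.

Lemma valuation_root_of_unity {z : algC} : Defs.root_of_unity z -> v z = 0.
Proof.
move=> zP; have [[|n] [//= _ zn1]] := zP.
have := @valuationX z n.+1 (root_of_unity_neq0 zP).
by rewrite zn1 valuation1 => /esym /eqP; rewrite mulf_eq0 pnatr_eq0 => /eqP.
Qed.

Lemma valuation_natX (k : nat) : v (p%:R ^+ k) = k%:R.
Proof.
have p_neq0 : p%:R != 0 :> algC by rewrite pnatr_eq0 -lt0n.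
by rewrite valuationX //; case: vP => _ _ ->; rewrite mulr1.
Qed.

Lemma valuationM_eq_natX_root {x y c : algC} {k : nat} :
  x != 0 -> y != 0 -> Defs.root_of_unity c -> x * y = p%:R ^+ k * c ->
  v x + v y = k%:R.
Proof.
move=> x_neq0 y_neq0 cP xy_eq.
have pk_neq0 : p%:R ^+ k != 0 :> algC by rewrite expf_neq0 // pnatr_eq0 -lt0n.
rewrite -valuationM // xy_eq valuationM ?(root_of_unity_neq0 cP) //.
by rewrite (valuation_root_of_unity cP) valuation_natX addr0.
Qed.

Lemma GSp4_hecke_params_valuations {r1 r2 : nat}
    {alpha beta gamma delta chi : algC} :
  GSp4_hecke_params p v r1 r2 alpha beta gamma delta chi ->
  [/\ [&& alpha != 0, beta != 0, gamma != 0 & delta != 0],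
      v alpha + v delta = (r1 + r2 + 3)%:R & v beta + v gamma = (r1 + r2 + 3)%:R].
Proof.
case=> [[nA [nB [nC nD]]] chiP [eAD eBC] _ _].
have [A0 B0] := (sqr_norm_natX_neq0 p_gt0 nA, sqr_norm_natX_neq0 p_gt0 nB).
have [C0 D0] := (sqr_norm_natX_neq0 p_gt0 nC, sqr_norm_natX_neq0 p_gt0 nD).
rewrite A0 B0 C0 D0 (valuationM_eq_natX_root A0 D0 chiP eAD).
by rewrite (valuationM_eq_natX_root B0 C0 chiP eBC).
Qed.

Lemma GL2_hecke_params_valuations {t2 : nat} {a2 b2 chi : algC} :
  GL2_hecke_params p v t2 a2 b2 chi ->
  [/\ a2 != 0, b2 != 0 & v a2 + v b2 = (t2 + 1)%:R].
Proof.
case=> [[na nb] chiS eab _].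
have [a0 b0] := (sqr_norm_natX_neq0 p_gt0 na, sqr_norm_natX_neq0 p_gt0 nb).
by rewrite a0 b0 (valuationM_eq_natX_root a0 b0 chiS eab).
Qed.

End PAdicValuation.

Lemma pair_sums_lt_critical {R : realFieldType} {r1 r2 : nat}
    {va vb wa wb : R} :
  (r2 <= r1)%N -> 0 <= va -> va <= vb -> 0 <= wa -> wa <= wb ->
  wa + wb = (r1 - r2 + 1)%:R -> va + vb = r2.+1%:R ->
  [/\ va + wa < (r1 + 2)%:R, va + wb < (r1 + 2)%:R & vb + wa < (r1 + 2)%:R].
Proof.
move=> r21 + + + + +; rewrite !natrD natrB // -addn1 !natrD.
have := ler0n R r2; rewrite -(ler_nat R) in r21.
by move=> *; split; lra.
Qed.

Lemma pair_sums_gt_critical {R : realFieldType} {r1 r2 : nat}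
    {va vb vc vd wa wb : R} :
  (r2 <= r1)%N -> 0 <= va -> va <= vb -> vc <= vd -> 0 <= wa -> wa <= wb ->
  va + vd = (r1 + r2 + 3)%:R -> vb + vc = (r1 + r2 + 3)%:R ->
  wa + wb = (r1 - r2 + 1)%:R -> va + vb = r2.+1%:R ->
  [/\ (r1 + 2)%:R < vc + wb, (r1 + 2)%:R < vd + wa & (r1 + 2)%:R < vd + wb].
Proof.
move=> r21 + + + + + + + +; rewrite !natrD natrB // -addn1 !natrD.
have := ler0n R r2; rewrite -(ler_nat R) in r21.
by move=> *; split; lra.
Qed.

Lemma critical_pair_sum_ordinary {R : realFieldType} {r1 r2 : nat}
    {va vb vc wa wb : R} :
  (r2 <= r1)%N -> 0 <= va -> 0 <= wa ->
  vb + vc = (r1 + r2 + 3)%:R -> wa + wb = (r1 - r2 + 1)%:R ->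
  va + vb = r2.+1%:R ->
  vb + wb = (r1 + 2)%:R \/ vc + wa = (r1 + 2)%:R -> va = 0 /\ wa = 0.
Proof.
move=> r21 + + + + +; rewrite !natrD natrB // -addn1 !natrD.
by move=> *; split; lra.
Qed.

Theorem lemma3p8 (p : nat) (v : algC -> rat) (r1 r2 t1 t2 : nat)
  (alpha beta gamma delta chiPi a2 b2 chiSigma : algC) :
  prime p ->
  p_adic_valuation p v ->
  admissible_weights r1 r2 t1 t2 ->
  GSp4_hecke_params p v r1 r2 alpha beta gamma delta chiPi ->
  GL2_hecke_params p v t2 a2 b2 chiSigma ->
  t1 = 0%N -> t2 = (r1 - r2)%N ->
  klingen_ordinary v r2 alpha beta ->
  p%:R ^+ (r1 + 2) \in pair_products alpha beta gamma delta a2 b2 ->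
  [/\ borel_ordinary v r2 alpha beta,
      GL2_ordinary v a2
    & beta * b2 = p%:R ^+ (r1 + 2) \/ gamma * a2 = p%:R ^+ (r1 + 2)].
Proof.
move=> /prime_gt0 p_gt0 vP [r21 _ _ _ _] hPi hSigma _ t2E klingen.
have [/and4P[A0 B0 C0 D0] vAD vBC] := GSp4_hecke_params_valuations p_gt0 vP hPi.
have [a0 b0] := GL2_hecke_params_valuations p_gt0 vP hSigma; rewrite t2E => vab.
case: hPi hSigma => _ _ _ [lAB [_ lCD]] [vA_ge0 _] [_ _ _ [va_ge0 lab]].
have vAB : v alpha + v beta = r2.+1%:R by rewrite -klingen (valuationM vP).
have [ltAa ltAb ltBa] := pair_sums_lt_critical r21 vA_ge0 lAB va_ge0 lab vab vAB.
have [gtCb gtDa gtDb] :=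
  pair_sums_gt_critical r21 vA_ge0 lAB lCD va_ge0 lab vAD vBC vab vAB.
have ordinary := critical_pair_sum_ordinary r21 vA_ge0 va_ge0 vBC vab vAB.
rewrite !inE => /or4P[| | |/or4P[| | |/orP[]]] /eqP xyE; move/(congr1 v): (xyE);
  rewrite (valuation_natX p_gt0 vP) (valuationM vP) // => /esym crit.
- by rewrite crit ltxx in ltAa.
- by rewrite crit ltxx in ltAb.
- by rewrite crit ltxx in ltBa.
- have [vA0 va0] := ordinary (or_introl crit).
  by split; [split | | left].
- have [vA0 va0] := ordinary (or_intror crit).
  by split; [split | | right].
- by rewrite crit ltxx in gtCb.
- by rewrite crit ltxx in gtDa.
- by rewrite crit ltxx in gtDb.
Qed.
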